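(* Let $\alpha$ be a regular cardinal, let $e_X:P\to X$ be an $\alpha$-supported meet-extension, let $Q$ be a poset and $f:P\to Q$ an order-preserving map. Define a partial map $f_X:X\to Q$ by $f_X(x)=\bigwedge f[e_X^{-1}(x^\uparrow)]$ when this meet exists in $Q$, and undefined otherwise; let $\mathrm{dom}(f_X)$ be its domain, with the order inherited from $X$. Then: (1) $f_X$ is order-preserving, $e_X[P]\subseteq\mathrm{dom}(f_X)$, and $f_X\circ e_X=f$. (2) Suppose $f$ is $(\alpha,e_X)$-continuous. Then: (a) if $Z\subseteq\mathrm{dom}(f_X)$ with $|Z|<\alpha$, $\bigwedge Z$ exists in $X$, and $Z$ has a greatest lower bound $b$ in $\mathrm{dom}(f_X)$, then $b=\bigwedge Z$; (b) $f_X$ is $\alpha$-meet-preserving on $\mathrm{dom}(f_X)$, i.e. whenever $Z\subseteq\mathrm{dom}(f_X)$ with $|Z|<\alpha$ has a greatest lower bound $b$ in $\mathrm{dom}(f_X)$, then $f_X(b)=\bigwedge f_X[Z]$ in $Q$; (c) if $g:X\to Q$ is a partial map whose domain contains $e_X[P]$, which is $\alpha$-meet-preserving on its domain (i.e. whenever $Z\subseteq\mathrm{dom}(g)$, $|Z|<\alpha$, has a greatest lower bound $b$ in $\mathrm{dom}(g)$, then $g(b)=\bigwedge g[Z]$), and which satisfies $g\circ e_X=f$, then $g(x)=f_X(x)$ for all $x\in\mathrm{dom}(f_X)\cap\mathrm{dom}(g)$.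
   Context: For $q$ in a poset, $q^\uparrow=\{q'\ge q\}$; for $S\subseteq P$, $S^\uparrow=\{p:p\ge s\text{ for some }s\in S\}$; $e^{-1}(Z)=\{p:e(p)\in Z\}$. A meet-extension is an order-embedding $e:P\to X$ with $x=\bigwedge e[e^{-1}(x^\uparrow)]$ for all $x\in X$. It is $\alpha$-supported if for every $x\in X$ there is $S\subseteq P$ with $|S|<\alpha$ and $x=\bigwedge e_X[S]$. An order-preserving $f:P\to Q$ is $(\alpha,e_X)$-continuous if for all $q\in Q$ and all $S\subseteq f^{-1}(q^\uparrow)$ with $|S|<\alpha$ there are $q_S\in Q$, $x_S\in X$ with $\bigwedge f[S]=q_S=\bigwedge f[e_X^{-1}(x_S^\uparrow)]$ and $S^\uparrow\subseteq e_X^{-1}(x_S^\uparrow)$. *)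

Set Implicit Arguments.

Definition card_le (A B : Type) : Prop :=
  exists f : A -> B, forall x y, f x = f y -> x = y.

Definition card_lt (A B : Type) : Prop := card_le A B /\ ~ card_le B A.

(* |S| < alpha, where the cardinal alpha is represented by a type K *)
Definition small {T : Type} (S : T -> Prop) (K : Type) : Prop :=
  card_lt {x : T | S x} K.

Definition regular (K : Type) : Prop :=
  card_le nat K /\
  forall (T I : Type) (F : I -> T -> Prop),
    card_lt I K -> (forall i, small (F i) K) ->
    small (fun x => exists i, F i x) K.

Definition is_poset {T : Type} (le : T -> T -> Prop) : Prop :=
  (forall x, le x x) /\
  (forall x y, le x y -> le y x -> x = y) /\
  (forall x y z, le x y -> le y z -> le x z).

Definition up {T : Type} (le : T -> T -> Prop) (q : T) : T -> Prop :=
  fun q' => le q q'.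

Definition up_set {T : Type} (le : T -> T -> Prop) (S : T -> Prop) : T -> Prop :=
  fun p => exists s, S s /\ le s p.

Definition image {A B : Type} (f : A -> B) (S : A -> Prop) : B -> Prop :=
  fun b => exists a, S a /\ f a = b.

Definition preimage {A B : Type} (f : A -> B) (Z : B -> Prop) : A -> Prop :=
  fun a => Z (f a).

Definition subset {T : Type} (A B : T -> Prop) : Prop := forall x, A x -> B x.

Definition is_glb {T : Type} (le : T -> T -> Prop) (S : T -> Prop) (m : T) : Prop :=
  (forall s, S s -> le m s) /\
  (forall b, (forall s, S s -> le b s) -> le b m).

Definition is_glb_in {T : Type} (le : T -> T -> Prop) (D S : T -> Prop) (m : T) : Prop :=
  D m /\ (forall s, S s -> le m s) /\
  (forall b, D b -> (forall s, S s -> le b s) -> le b m).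

Definition order_embedding {A B : Type} (leA : A -> A -> Prop) (leB : B -> B -> Prop)
  (e : A -> B) : Prop :=
  forall p q, leB (e p) (e q) <-> leA p q.

Definition order_preserving {A B : Type} (leA : A -> A -> Prop) (leB : B -> B -> Prop)
  (f : A -> B) : Prop :=
  forall p q, leA p q -> leB (f p) (f q).

Definition meet_extension {P X : Type} (leP : P -> P -> Prop) (leX : X -> X -> Prop)
  (e : P -> X) : Prop :=
  order_embedding leP leX e /\
  forall x, is_glb leX (image e (preimage e (up leX x))) x.

Definition alpha_supported {P X : Type} (K : Type) (leX : X -> X -> Prop) (e : P -> X) : Prop :=
  forall x, exists S : P -> Prop, small S K /\ is_glb leX (image e S) x.

Definition alpha_e_continuous {P X Q : Type} (K : Type)
  (leP : P -> P -> Prop) (leX : X -> X -> Prop) (leQ : Q -> Q -> Prop)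
  (e : P -> X) (f : P -> Q) : Prop :=
  order_preserving leP leQ f /\
  forall (q : Q) (S : P -> Prop),
    subset S (preimage f (up leQ q)) -> small S K ->
    exists (qS : Q) (xS : X),
      is_glb leQ (image f S) qS /\
      is_glb leQ (image f (preimage e (up leX xS))) qS /\
      subset (up_set leP S) (preimage e (up leX xS)).

(* ---------- partial maps, as functional relations ---------- *)
Definition pmap (X Q : Type) := X -> Q -> Prop.

Definition functional {X Q : Type} (g : pmap X Q) : Prop :=
  forall x q q', g x q -> g x q' -> q = q'.

Definition pdom {X Q : Type} (g : pmap X Q) : X -> Prop := fun x => exists q, g x q.

Definition pimage {X Q : Type} (g : pmap X Q) (Z : X -> Prop) : Q -> Prop :=
  fun q => exists z, Z z /\ g z q.

Definition fX {P X Q : Type} (leX : X -> X -> Prop) (leQ : Q -> Q -> Prop)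
  (e : P -> X) (f : P -> Q) : pmap X Q :=
  fun x q => is_glb leQ (image f (preimage e (up leX x))) q.

Definition alpha_meet_preserving {X Q : Type} (K : Type)
  (leX : X -> X -> Prop) (leQ : Q -> Q -> Prop) (g : pmap X Q) : Prop :=
  forall (Z : X -> Prop) (b : X),
    subset Z (pdom g) -> small Z K -> is_glb_in leX (pdom g) Z b ->
    forall qb, g b qb -> is_glb leQ (pimage g Z) qb.

(* By regularity, the α-small supports of the members of an α-small
   Z ⊆ dom f_X combine into one α-small S ⊆ P, and continuity applied
   to S produces a point x_S below all of Z at which f_X is defined and equals
   ⋀ f_X[Z]; comparing x_S with the two meets of Z gives (a) and (b).  For (c),
   continuity applied to a small support S of x gives f_X(x) = ⋀ f[S], while
   meet preservation of g at x = ⋀ e[S] gives g(x) = ⋀ g[e[S]] = ⋀ f[S]. *)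
From Stdlib Require Import IndefiniteDescription ProofIrrelevance.

Set Implicit Arguments.

Definition lower_bound {T : Type} (le : T -> T -> Prop) (S : T -> Prop) (m : T) : Prop :=
  forall s, S s -> le m s.

Lemma glb_unique {T : Type} (le : T -> T -> Prop) (S : T -> Prop) (a b : T) :
  is_poset le -> is_glb le S a -> is_glb le S b -> a = b.
Proof.
  intros [_ [antisym _]] [a_lb a_max] [b_lb b_max].
  apply antisym; [apply b_max | apply a_max]; assumption.
Qed.

Lemma is_glb_ext {T : Type} (le : T -> T -> Prop) (A B : T -> Prop) (m : T) :
  (forall t, A t <-> B t) -> is_glb le A m -> is_glb le B m.
Proof.
  intros AB [m_lb m_max]. split.
  - intros s Bs. apply m_lb, AB, Bs.
  - intros b b_lb. apply m_max. intros s As. apply b_lb, AB, As.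
Qed.

Lemma is_glb_of_lower_bound_ge {T : Type} (le : T -> T -> Prop) (S : T -> Prop) (m b : T) :
  is_poset le -> is_glb le S m -> lower_bound le S b -> le m b -> is_glb le S b.
Proof.
  intros [_ [_ trans]] [_ m_max] b_lb mb. split; [exact b_lb |].
  intros c c_lb. apply (trans _ m); [apply m_max |]; assumption.
Qed.

Lemma is_glb_in_of_is_glb {T : Type} (le : T -> T -> Prop) (D S : T -> Prop) (m : T) :
  is_glb le S m -> D m -> is_glb_in le D S m.
Proof. intros [m_lb m_max] Dm. split; [exact Dm | split; auto]. Qed.

Lemma card_le_lt_trans (A B C : Type) : card_le A B -> card_lt B C -> card_lt A C.
Proof.
  intros [g g_inj] [[h h_inj] not_CB]. split.
  - exists (fun a => h (g a)). intros x y E. apply g_inj, h_inj, E.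
  - intros [k k_inj]. apply not_CB. exists (fun c => g (k c)). intros x y E. apply k_inj, g_inj, E.
Qed.

Lemma small_image {A B : Type} (e : A -> B) (S : A -> Prop) (K : Type) :
  small S K -> small (image e S) K.
Proof.
  apply card_le_lt_trans.
  assert (pick : forall y : {y : B | image e S y}, {a : A | S a /\ e a = proj1_sig y}).
  { intros [y Hy]. apply constructive_indefinite_description. exact Hy. }
  exists (fun y => exist _ (proj1_sig (pick y)) (proj1 (proj2_sig (pick y)))).
  intros y1 y2 E. injection E as E.
  apply eq_sig_hprop; [intros; apply proof_irrelevance |].
  rewrite <- (proj2 (proj2_sig (pick y1))), <- (proj2 (proj2_sig (pick y2))), E.
  reflexivity.
Qed.

Section Extension.
Variables (P X Q : Type) (leP : P -> P -> Prop) (leX : X -> X -> Prop) (leQ : Q -> Q -> Prop).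
Variables (e : P -> X) (f : P -> Q).
Hypothesis HX : is_poset leX.

Let leX_refl : forall x, leX x x := proj1 HX.
Let leX_trans : forall {x y z}, leX x y -> leX y z -> leX x z := proj2 (proj2 HX).

Notation fX := (fX leX leQ e f).
Notation U x := (preimage e (up leX x)).

Lemma fX_le_f x q p : fX x q -> leX x (e p) -> leQ q (f p).
Proof. intros [q_lb _] xp. apply q_lb. exists p. split; auto. Qed.

Lemma lower_bound_fX_antitone m z qz c :
  leX m z -> fX z qz -> lower_bound leQ (image f (U m)) c -> leQ c qz.
Proof.
  intros mz [_ qz_max] c_lb. apply qz_max.
  intros s [p [zp <-]]. apply c_lb. exists p. split; auto. exact (leX_trans mz zp).
Qed.

Lemma fX_mono x y qx qy : fX x qx -> fX y qy -> leX x y -> leQ qx qy.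
Proof. intros Hx Hy xy. exact (lower_bound_fX_antitone xy Hy (proj1 Hx)). Qed.

Lemma fX_of_le x m q :
  fX x q -> leX x m -> (forall c, lower_bound leQ (image f (U m)) c -> leQ c q) -> fX m q.
Proof.
  intros Hx xm q_max. split; [| exact q_max].
  intros s [p [mp <-]]. apply (fX_le_f Hx), (leX_trans xm mp).
Qed.

Lemma fX_e p :
  meet_extension leP leX e -> order_preserving leP leQ f -> fX (e p) (f p).
Proof.
  intros [emb _] f_mono. split.
  - intros s [p' [pp' <-]]. apply f_mono, emb, pp'.
  - intros b b_lb. apply b_lb. exists p. split; [apply leX_refl | reflexivity].
Qed.

Section Continuity.
Variable K : Type.
Hypothesis HP : is_poset leP.
Hypothesis HQ : is_poset leQ.
Hypothesis Hreg : regular K.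
Hypothesis Hsupp : alpha_supported K leX e.
Hypothesis Hc : alpha_e_continuous K leP leX leQ e f.

Let leQ_trans : forall {x y z}, leQ x y -> leQ y z -> leQ x z := proj2 (proj2 HQ).

Lemma small_joint_support (Z : X -> Prop) :
  small Z K ->
  exists S : P -> Prop, small S K /\
    (forall p, S p -> exists z, Z z /\ leX z (e p)) /\
    (forall x, lower_bound leX (image e S) x -> lower_bound leX Z x).
Proof.
  intros Z_small.
  assert (supp : forall z : {z : X | Z z},
             {S : P -> Prop | small S K /\ is_glb leX (image e S) (proj1_sig z)}).
  { intros z. apply constructive_indefinite_description, Hsupp. }
  exists (fun p => exists z, proj1_sig (supp z) p). split; [| split].
  - apply (proj2 Hreg); [exact Z_small |]. intros z. exact (proj1 (proj2_sig (supp z))).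
  - intros p [[z Zz] Sp]. exists z. split; [exact Zz |].
    apply (proj1 (proj2 (proj2_sig (supp (exist _ z Zz))))). exists p. auto.
  - intros x x_lb z Zz. apply (proj2 (proj2 (proj2_sig (supp (exist _ z Zz))))).
    intros s [p [Sp <-]]. apply x_lb. exists p. split; [exists (exist _ z Zz); exact Sp | auto].
Qed.

(* [q0] serves only to meet the hypothesis of continuity. *)
Lemma fX_glb_attained (Z : X -> Prop) (q0 : Q) :
  subset Z (pdom fX) -> small Z K -> lower_bound leQ (pimage fX Z) q0 ->
  exists x q, fX x q /\ lower_bound leX Z x /\ is_glb leQ (pimage fX Z) q.
Proof.
  intros Z_dom Z_small q0_lb.
  destruct (small_joint_support Z_small) as [S [S_small [S_above S_lb]]].
  assert (S_fX : forall p, S p -> exists qz, pimage fX Z qz /\ leQ qz (f p)).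
  { intros p Sp. destruct (S_above p Sp) as [z [Zz zp]]. destruct (Z_dom z Zz) as [qz Hz].
    exists qz. split; [exists z; auto | exact (fX_le_f Hz zp)]. }
  destruct ((proj2 Hc) q0 S) as [qS [xS [qS_glb [qS_fX S_up]]]]; [| exact S_small |].
  { intros p Sp. destruct (S_fX p Sp) as [qz [Hqz le_qz]]. exact (leQ_trans (q0_lb _ Hqz) le_qz). }
  assert (xS_lb : lower_bound leX Z xS).
  { apply S_lb. intros s [p [Sp <-]]. apply S_up. exists p. split; [exact Sp | apply (proj1 HP)]. }
  exists xS, qS. split; [exact qS_fX | split; [exact xS_lb | split]].
  - intros q [z [Zz Hz]]. exact (fX_mono qS_fX Hz (xS_lb z Zz)).
  - intros c c_lb. apply (proj2 qS_glb). intros s [p [Sp <-]].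
    destruct (S_fX p Sp) as [qz [Hqz le_qz]]. exact (leQ_trans (c_lb _ Hqz) le_qz).
Qed.

Lemma fX_meet_in_dom_eq_meet (Z : X -> Prop) (m b : X) :
  subset Z (pdom fX) -> small Z K -> is_glb leX Z m -> is_glb_in leX (pdom fX) Z b -> b = m.
Proof.
  intros Z_dom Z_small [m_lb m_max] [[qb Hb] [b_lb b_max]].
  destruct (fX_glb_attained (q0 := qb) Z_dom Z_small) as [x [q [Hx [x_lb [q_lb q_max]]]]].
  { intros q [z [Zz Hz]]. exact (fX_mono Hb Hz (b_lb z Zz)). }
  assert (Hm : fX m q).
  { apply (fX_of_le Hx (m_max x x_lb)). intros c c_lb. apply q_max.
    intros qz [z [Zz Hz]]. exact (lower_bound_fX_antitone (m_lb z Zz) Hz c_lb). }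
  apply (proj1 (proj2 HX)); [apply m_max, b_lb | apply b_max; [exists q; exact Hm | exact m_lb]].
Qed.

Lemma fX_alpha_meet_preserving : alpha_meet_preserving K leX leQ fX.
Proof.
  intros Z b Z_dom Z_small [b_dom [b_lb b_max]] qb Hb.
  destruct (fX_glb_attained (q0 := qb) Z_dom Z_small) as [x [q [Hx [x_lb q_glb]]]].
  { intros q [z [Zz Hz]]. exact (fX_mono Hb Hz (b_lb z Zz)). }
  apply (is_glb_of_lower_bound_ge HQ q_glb).
  - intros q' [z [Zz Hz]]. exact (fX_mono Hb Hz (b_lb z Zz)).
  - apply (fX_mono Hx Hb), b_max; [exists q; exact Hx | exact x_lb].
Qed.

Lemma fX_glb_support (S : P -> Prop) (x : X) (q : Q) :
  is_glb leX (image e S) x -> small S K -> fX x q -> is_glb leQ (image f S) q.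
Proof.
  intros [x_lb x_max] S_small Hx.
  assert (S_up : forall p, S p -> leX x (e p)) by (intros p Sp; apply x_lb; exists p; auto).
  destruct ((proj2 Hc) q S) as [qS [xS [qS_glb [qS_fX S_xS]]]]; [| exact S_small |].
  { intros p Sp. exact (fX_le_f Hx (S_up p Sp)). }
  apply (is_glb_of_lower_bound_ge HQ qS_glb).
  - intros s [p [Sp <-]]. exact (fX_le_f Hx (S_up p Sp)).
  - apply (fX_mono qS_fX Hx), x_max. intros s [p [Sp <-]].
    apply S_xS. exists p. split; [exact Sp | apply (proj1 HP)].
Qed.

Lemma fX_unique_meet_preserving_extension (g : pmap X Q) :
  functional g -> alpha_meet_preserving K leX leQ g -> (forall p, g (e p) (f p)) ->
  forall x q1 q2, fX x q1 -> g x q2 -> q1 = q2.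
Proof.
  intros g_fun g_mp g_e x q1 q2 H1 H2.
  destruct (Hsupp x) as [S [S_small x_glb]].
  apply (glb_unique HQ (fX_glb_support x_glb S_small H1)).
  apply (is_glb_ext (A := pimage g (image e S))).
  - intros q. split.
    + intros [y [[p [Sp <-]] Hy]]. exists p. split; [exact Sp | exact (g_fun _ _ _ (g_e p) Hy)].
    + intros [p [Sp <-]]. exists (e p). split; [exists p; auto | apply g_e].
  - apply (g_mp _ x); [| apply small_image, S_small | | exact H2].
    + intros y [p [_ <-]]. exists (f p). apply g_e.
    + apply is_glb_in_of_is_glb; [exact x_glb | exists q2; exact H2].
Qed.

End Continuity.
End Extension.

Theorem proposition7p4 (K : Type) (P X Q : Type)
  (leP : P -> P -> Prop) (leX : X -> X -> Prop) (leQ : Q -> Q -> Prop)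
  (HP : is_poset leP) (HX : is_poset leX) (HQ : is_poset leQ)
  (e : P -> X) (f : P -> Q)
  (Hreg : regular K)
  (Hext : meet_extension leP leX e)
  (Hsupp : alpha_supported K leX e)
  (Hf : order_preserving leP leQ f) :
  (* (1) *)
  ((forall x y qx qy, fX leX leQ e f x qx -> fX leX leQ e f y qy ->
       leX x y -> leQ qx qy) /\
   (forall p, pdom (fX leX leQ e f) (e p)) /\
   (forall p, fX leX leQ e f (e p) (f p)))
  /\
  (* (2) *)
  (alpha_e_continuous K leP leX leQ e f ->
    (* (a) *)
    (forall (Z : X -> Prop) (m b : X),
       subset Z (pdom (fX leX leQ e f)) -> small Z K ->
       is_glb leX Z m ->
       is_glb_in leX (pdom (fX leX leQ e f)) Z b ->
       b = m) /\
    (* (b) *)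
    alpha_meet_preserving K leX leQ (fX leX leQ e f) /\
    (* (c) *)
    (forall g : pmap X Q,
       functional g ->
       (forall p, pdom g (e p)) ->
       alpha_meet_preserving K leX leQ g ->
       (forall p, g (e p) (f p)) ->
       forall x q1 q2, fX leX leQ e f x q1 -> g x q2 -> q1 = q2)).
Proof.
  split; [split; [| split] | intros Hc; split; [| split]].
  - exact (fX_mono HX).
  - intros p. exists (f p). exact (fX_e HX p Hext Hf).
  - intros p. exact (fX_e HX p Hext Hf).
  - exact (fX_meet_in_dom_eq_meet HX HP HQ Hreg Hsupp Hc).
  - exact (fX_alpha_meet_preserving HX HP HQ Hreg Hsupp Hc).
  - intros g g_fun _. exact (fX_unique_meet_preserving_extension HX HP HQ Hsupp Hc g_fun).
Qed.
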